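(* Let $M$ be a module over the Laurent polynomial ring $\mathbb{Z}[t^{\pm 1}]$, equipped with the binary operation $a * b = ta + (1-t)b$ (the Alexander quandle structure on $M$). Then $(M,* )$ is a Rump right quasigroup if and only if $(1-t)^{2}m = 0$ for every $m \in M$.
   Context: A magma $(X,\cdot)$ is a right quasigroup if every right translation $y \mapsto yx$ is a bijection of $X$. A Rump right quasigroup (cycle set) is a right quasigroup satisfying the identity $(zx)(yx) = (zy)(xy)$ for all $x,y,z \in X$. *)

From HB Require Import structures.
From mathcomp Require Import all_boot all_order all_algebra.
Set Implicit Arguments. Unset Strict Implicit. Unset Printing Implicit Defensive.
Import GRing.Theory.
Local Open Scope ring_scope.

(* A module over the Laurent polynomial ring Z[t, t^-1] is encoded as an
   abelian group M (zmodType) together with the action of t, an additive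
   bijection t : M -> M (the action of t^-1 being its inverse). *)

Definition right_quasigroup (X : Type) (op : X -> X -> X) : Prop :=
  forall x : X, bijective (fun y => op y x).

Definition rump_right_quasigroup (X : Type) (op : X -> X -> X) : Prop :=
  right_quasigroup op /\
  forall x y z : X, op (op z x) (op y x) = op (op z y) (op x y).

Definition alexander_op (M : zmodType) (t : M -> M) (a b : M) : M :=
  t a + (b - t b).

Definition one_minus_t (M : zmodType) (t : M -> M) (m : M) : M := m - t m.

From HB Require Import structures.
From mathcomp Require Import all_boot all_order all_algebra.
Local Open Scope ring_scope.
Import GRing.Theory.

(* Since t commutes with 1 - t, both sides of the cycle-set identity expand to
   t^2 z + (1 - t) t (x + y) plus (1 - t)^2 x, respectively (1 - t)^2 y; so
   the identity holds iff (1 - t)^2 is constant, i.e. zero.  The right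
   translations y |-> t y + (1 - t) x are bijective because t is. *)

Section AlexanderQuandle.

Variables (M : zmodType) (t : {additive M -> M}).

Local Notation s := (one_minus_t t).
Local Notation op := (alexander_op t).

Lemma one_minus_tD : {morph s : u v / u + v}.
Proof. by move=> u v; rewrite /one_minus_t raddfD opprD addrACA. Qed.

Lemma one_minus_t0 : s 0 = 0.
Proof. by rewrite /one_minus_t raddf0 subr0. Qed.

Lemma one_minus_tC u : t (s u) = s (t u).
Proof. by rewrite /one_minus_t raddfB. Qed.

Lemma alexander_opE a b : op a b = t a + s b.
Proof. by []. Qed.

Lemma alexander_op_cycle_expand x y z :
  op (op z x) (op y x) = t (t z) + (s (t x) + s (t y)) + s (s x).
Proof.
rewrite !alexander_opE one_minus_tD raddfD one_minus_tC.
by rewrite addrA -(addrA _ (s (t x))) (addrC (s (t x))) addrA.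
Qed.

Lemma alexander_cycle_identityP x y z :
  op (op z x) (op y x) = op (op z y) (op x y) <-> s (s x) = s (s y).
Proof.
rewrite !alexander_op_cycle_expand (addrC (s (t y))).
by split; [exact: addrI | move->].
Qed.

Lemma right_quasigroup_alexander : bijective t -> right_quasigroup op.
Proof.
case=> g tK gK x; exists (fun w => g (w - s x)) => w /=.
  by rewrite alexander_opE addrK tK.
by rewrite alexander_opE gK subrK.
Qed.

End AlexanderQuandle.

Theorem mainTheorem1 (M : zmodType) (t : {additive M -> M}) (ht : bijective t) :
  rump_right_quasigroup (alexander_op t) <->
  (forall m : M, one_minus_t t (one_minus_t t m) = 0).
Proof.
split=> [[_ cycle] m | s2_eq0].
  by have /alexander_cycle_identityP := cycle m 0 0; rewrite !one_minus_t0.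
split; first exact: right_quasigroup_alexander.
by move=> x y z; apply/alexander_cycle_identityP; rewrite !s2_eq0.
Qed.
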